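(* Let $G$ be a graph with girth at least $5$ (in particular, any forest). Then $\gamma^{SLD}(G)=\gamma_2(G)$.
   Context: All graphs are finite, simple and undirected (not necessarily connected). For $u\in V$, $N(u)$ is the set of neighbours of $u$ and $N[u]=N(u)\cup\{u\}$. A code is a non-empty subset $C\subseteq V$; $I(C;u)=N[u]\cap C$. A code $C$ is self-locating-dominating if for every $u\in V\setminus C$ we have $I(C;u)\neq\emptyset$ and $\bigcap_{c\in I(C;u)}N[c]=\{u\}$; $\gamma^{SLD}(G)$ is the minimum size of such a code. A set $S\subseteq V$ is $2$-dominating if $|N[u]\cap S|\ge 2$ for every $u\in V\setminus S$; $\gamma_2(G)$ is the minimum size of a $2$-dominating set. The girth is the length of a shortest cycle; acyclic graphs have infinite girth. *)

From mathcomp Require Import all_boot.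
Set Implicit Arguments. Unset Strict Implicit. Unset Printing Implicit Defensive.

Section Graphs.
Variables (T : finType) (e : rel T).

Definition simple_graph : Prop := symmetric e /\ irreflexive e.

Definition cnbhd (u : T) : {set T} := [set v | (v == u) || e u v].

Definition Iset (C : {set T}) (u : T) : {set T} := cnbhd u :&: C.

Definition is_SLD (C : {set T}) : bool :=
  (C != set0) &&
  [forall u, (u \notin C) ==>
     ((Iset C u != set0) &&
      (\bigcap_(c in Iset C u) cnbhd c == [set u]))].

Definition is_2dom (S : {set T}) : bool :=
  [forall u, (u \notin S) ==> (1 < #|cnbhd u :&: S|)].

(* minimum sizes (the whole vertex set is always feasible when T is nonempty,
   so #|T| is a valid default for the min) *)
Definition gammaSLD : nat := \big[minn/#|T|]_(C : {set T} | is_SLD C) #|C|.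
Definition gamma2 : nat := \big[minn/#|T|]_(S : {set T} | is_2dom S) #|S|.

Definition girth_ge5 : Prop :=
  forall s : seq T, ucycle e s -> size s != 3 /\ size s != 4.

End Graphs.

(** In a graph of girth at least 5 two distinct neighbours [c1], [c2] of a
    vertex [u] have [u] as their only common closed neighbour: a common
    neighbour [v <> u] would close a 4-cycle [u c1 v c2], and [v = c1] or
    [v = c2] a triangle.  Hence a non-code vertex seeing two codewords is
    located by them, and conversely a non-code vertex seeing a single
    codeword [c] is never located, since [N[c]] also contains [c].  So the
    self-locating-dominating codes are exactly the 2-dominating sets, and
    the two minima range over the same family. *)

From mathcomp Require Import all_boot.

Set Implicit Arguments.
Unset Strict Implicit.
Unset Printing Implicit Defensive.

Section SelfLocatingDomination.

Variables (T : finType) (e : rel T).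

Lemma cnbhd_id (u : T) : u \in cnbhd e u.
Proof. by rewrite inE eqxx. Qed.

Lemma in_Iset_notin (C : {set T}) (u c : T) :
  u \notin C -> (c \in Iset e C u) = (c \in C) && e u c.
Proof.
move=> uC; rewrite !inE andbC; case cC: (c \in C) => //=.
by case: eqP => // cu; rewrite -cu cC in uC.
Qed.

Lemma is_SLD_2dom (C : {set T}) : is_SLD e C -> is_2dom e C.
Proof.
case/andP=> _ /forallP sld; apply/forallP=> u; apply/implyP=> uC.
have /andP [/set0Pn [c cI] /eqP capI] := implyP (sld u) uC.
rewrite ltnNge; apply/negP=> le1.
have Ic : Iset e C u = [set c].
  by apply/eqP; rewrite eq_sym eqEcard sub1set cI cards1.
move: capI; rewrite Ic big_set1 => Nc.
have := cnbhd_id c; rewrite Nc inE => /eqP cu.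
by move: cI; rewrite in_Iset_notin // => /andP [cC _]; rewrite -cu cC in uC.
Qed.

Lemma is_2dom_neq0 (C : {set T}) : 0 < #|T| -> is_2dom e C -> C != set0.
Proof.
case/card_gt0P=> x _ /forallP dom; apply/set0Pn.
case xC: (x \in C); first by exists x.
have /card_gt1P [a [_ [aI _ _]]] := implyP (dom x) (negbT xC).
by exists a; move: aI; rewrite inE => /andP [].
Qed.

Hypotheses (e_sym : symmetric e) (e_irr : irreflexive e) (girth : girth_ge5 e).

Lemma edge_neq (a b : T) : e a b -> a != b.
Proof. by apply: contraTneq => ->; rewrite e_irr. Qed.

Lemma no_triangle (a b c : T) : e a b -> e b c -> e c a -> False.
Proof.
move=> ab bc ca; suff /girth [/eqP] : ucycle e [:: a; b; c] by [].
by rewrite /ucycle /= ab bc ca !inE !negb_or (edge_neq ab) (edge_neq bc) eq_sym (edge_neq ca).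
Qed.

Lemma no_square (a b c d : T) :
  e a b -> e b c -> e c d -> e d a -> a != c -> b != d -> False.
Proof.
move=> ab bc cd da ac bd; suff /girth [_ /eqP] : ucycle e [:: a; b; c; d] by [].
rewrite /ucycle /= ab bc cd da !inE !negb_or ac bd (edge_neq ab) (edge_neq bc).
by rewrite (edge_neq cd) eq_sym (edge_neq da).
Qed.

Lemma cnbhd_two_neighbours (u c1 c2 v : T) :
  e u c1 -> e u c2 -> c1 != c2 ->
  v \in cnbhd e c1 -> v \in cnbhd e c2 -> v = u.
Proof.
move=> uc1 uc2 c12; rewrite !inE.
case/orP=> [/eqP vc1 | c1v]; case/orP=> [/eqP vc2 | c2v].
- by rewrite -vc1 -vc2 eqxx in c12.
- by move: c2v; rewrite vc1 e_sym => /(no_triangle uc1) []; rewrite e_sym.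
- by move: c1v; rewrite vc2 => /(no_triangle uc1) []; rewrite e_sym.
apply/eqP; apply: contraT; rewrite eq_sym => uv.
by case: (no_square uc1 c1v _ _ uv c12); rewrite e_sym.
Qed.

Lemma is_2dom_SLD (C : {set T}) : 0 < #|T| -> is_2dom e C -> is_SLD e C.
Proof.
move=> T0 dom; rewrite /is_SLD is_2dom_neq0 //=.
apply/forallP=> u; apply/implyP=> uC.
have /card_gt1P [c1 [c2 [c1I c2I c12]]] : 1 < #|Iset e C u|.
  exact: implyP (forallP dom u) uC.
apply/andP; split; first by apply/set0Pn; exists c1.
apply/eqP/setP=> v; rewrite inE; apply/bigcapP/eqP => [Nv | -> c].
  have /andP [_ uc1] : (c1 \in C) && e u c1 by rewrite -in_Iset_notin.
  have /andP [_ uc2] : (c2 \in C) && e u c2 by rewrite -in_Iset_notin.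
  exact: cnbhd_two_neighbours uc1 uc2 c12 (Nv _ c1I) (Nv _ c2I).
by rewrite in_Iset_notin // inE e_sym => /andP [_ ->]; rewrite orbT.
Qed.

Lemma is_SLD_2domE (C : {set T}) : 0 < #|T| -> is_SLD e C = is_2dom e C.
Proof. by move=> T0; apply/idP/idP; [apply: is_SLD_2dom | apply: is_2dom_SLD]. Qed.

End SelfLocatingDomination.

Theorem mainTheorem11 (T : finType) (e : rel T) :
  simple_graph e -> 0 < #|T| -> girth_ge5 e ->
  gammaSLD e = gamma2 e.
Proof.
move=> [e_sym e_irr] T0 girth.
by apply: eq_bigl => C; rewrite is_SLD_2domE.
Qed.
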